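(* For any prime $p\ge5$, any integer $\alpha\ge1$ and any integer $n\ge0$, \[ b_{2}\!\left(p^{2\alpha}n+\frac{(24i+p)p^{2\alpha-1}-1}{24}\right)\equiv 0 \pmod 2 \] for each $i=1,2,\ldots,p-1$.
   Context: For a positive integer $\ell$, $b_\ell(n)$ denotes the number of $\ell$-regular partitions of $n$, i.e. partitions of $n$ having no part divisible by $\ell$; equivalently $\sum_{n\ge0}b_\ell(n)q^n=\prod_{k\ge1}\frac{1-q^{\ell k}}{1-q^k}$. *)

From mathcomp Require Import all_boot.
Set Implicit Arguments. Unset Strict Implicit. Unset Printing Implicit Defensive.

(* A partition of n is encoded by its multiplicity function: m k = number of
   parts equal to k, for k = 0..n (parts are at most n).  There are no parts
   equal to 0, and sum_k k * m k = n (so each m k <= n, hence fits in 'I_n.+1). *)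
Definition is_partition_mult (n : nat) (m : {ffun 'I_n.+1 -> 'I_n.+1}) : bool :=
  (m ord0 == 0 :> nat) && (\sum_(k < n.+1) (k : nat) * m k == n).

Definition is_regular_mult (ell n : nat) (m : {ffun 'I_n.+1 -> 'I_n.+1}) : bool :=
  [forall k : 'I_n.+1, (0 < (k : nat)) && (ell %| k) ==> (m k == 0 :> nat)].

Definition b (ell n : nat) : nat :=
  #|[set m : {ffun 'I_n.+1 -> 'I_n.+1} | is_partition_mult m && is_regular_mult ell m]|.

From mathcomp Require Import all_boot all_algebra.
From mathcomp Require Import ring zify.
Set Implicit Arguments. Unset Strict Implicit. Unset Printing Implicit Defensive.

(* By Euler's identity prod_k (1 + q^k) = prod_k 1 / (1 - q^(2k-1)), read modulo X^(N+1)
   where all products are finite, b_2(N) counts the partitions of N into distinct parts.  Franklin's involution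
   on these (move the smallest part onto the "slope" of consecutive largest parts, or move
   the slope off as a new smallest part) has no fixed point unless N = k(3k -+ 1)/2, i.e.
   unless 24N + 1 is a square.  For the N of the theorem,
   24N + 1 = p^(2 alpha - 1) (p (24n + 1) + 24i) with p not dividing the second factor,
   so its p-adic valuation is odd and it is not a square. *)

Import GRing.Theory Num.Theory.

Lemma big_ord_even_odd (R : Type) (idx : R) (op : Monoid.com_law idx) n (F : nat -> R) :
  \big[op/idx]_(k < n + n) F k =
  op (\big[op/idx]_(k < n) F (2 * k)%N) (\big[op/idx]_(k < n) F (2 * k + 1)%N).
Proof.
elim: n => [|n IH]; first by rewrite !big_ord0 Monoid.mulm1.
rewrite addnS addSn !big_ord_recr /= IH -Monoid.mulmA Monoid.mulmACA.
by rewrite mul2n -addnn addn1.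
Qed.

Section PolyModX.
Local Open Scope ring_scope.
Variables (R : comNzRingType) (M : nat).
Implicit Types A B C D U V : {poly R}.

Definition eqmodX A B := exists q, A - B = q * 'X^M.

Lemma eqmodX_refl A : eqmodX A A.
Proof. by exists 0; rewrite subrr mul0r. Qed.

Lemma eqmodX_sym A B : eqmodX A B -> eqmodX B A.
Proof. by case=> q h; exists (- q); rewrite mulNr -h opprB. Qed.

Lemma eqmodX_trans A B C : eqmodX A B -> eqmodX B C -> eqmodX A C.
Proof. by case=> q1 h1 [q2 h2]; exists (q1 + q2); rewrite mulrDl -h1 -h2 addrA subrK. Qed.

Lemma eqmodX_add A B C D : eqmodX A B -> eqmodX C D -> eqmodX (A + C) (B + D).
Proof. by case=> q1 h1 [q2 h2]; exists (q1 + q2); rewrite mulrDl -h1 -h2; ring. Qed.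

Lemma eqmodX_mul A B C D : eqmodX A B -> eqmodX C D -> eqmodX (A * C) (B * D).
Proof.
case=> q1 h1 [q2 h2]; exists (q1 * C + B * q2).
by rewrite mulrDl -mulrA [C * _]mulrC mulrA -h1 -mulrA -h2; ring.
Qed.

Lemma eqmodX_coef A B i : eqmodX A B -> (i < M)%N -> A`_i = B`_i.
Proof. by case=> q h hi; apply/eqP; rewrite -subr_eq0 -coefB h coefMXn hi. Qed.

Lemma eqmodX_Xn k : (M <= k)%N -> eqmodX 'X^k 0.
Proof. by move=> hk; exists 'X^(k - M); rewrite subr0 -exprD subnK. Qed.

Lemma eqmodX_cancel A B U V : eqmodX (A * U) (B * U) -> eqmodX (U * V) 1 -> eqmodX A B.
Proof.
move=> hAB hUV; have hV := eqmodX_mul hAB (eqmodX_refl V).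
rewrite -!mulrA in hV; move: (eqmodX_mul (eqmodX_refl A) hUV) => hA.
move: (eqmodX_mul (eqmodX_refl B) hUV) => hB; rewrite !mulr1 in hA hB.
exact: eqmodX_trans (eqmodX_sym hA) (eqmodX_trans hV hB).
Qed.

Lemma eqmodX_prod1 (I : Type) (r : seq I) (P : pred I) (F : I -> {poly R}) :
  (forall i, P i -> eqmodX (F i) 1) -> eqmodX (\prod_(i <- r | P i) F i) 1.
Proof.
move=> hF; apply: (big_ind (eqmodX^~ 1)) => //; first exact: eqmodX_refl.
by move=> x y hx hy; rewrite -[1]mulr1; apply: eqmodX_mul.
Qed.

Lemma eqmodX_prod_tail t (F : nat -> {poly R}) :
  (forall k, (M <= k)%N -> eqmodX (F k) 1) ->
  eqmodX (\prod_(k < M + t) F k) (\prod_(k < M) F k).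
Proof.
move=> hF; rewrite big_split_ord /= -[X in eqmodX _ X]mulr1.
apply: eqmodX_mul; first exact: eqmodX_refl.
by apply: eqmodX_prod1 => k _; apply: hF; rewrite leq_addr.
Qed.

Definition geom k := \sum_(j < M) 'X^(k * j) : {poly R}.

Lemma mul_1subX_geom k : (0 < k)%N -> eqmodX ((1 - 'X^k) * geom k) 1.
Proof.
have telescope n : (1 - 'X^k) * \sum_(j < n) 'X^(k * j) = 1 - 'X^(k * n) :> {poly R}.
  elim: n => [|n IH]; first by rewrite big_ord0 muln0 expr0 subrr mulr0.
  by rewrite big_ord_recr /= mulrDr IH mulnS exprD; ring.
move=> hk; rewrite /geom telescope; exists (- 'X^(k * M - M)).
by rewrite mulNr -exprD subnK ?leq_pmull //; ring.
Qed.

Lemma geom_ge k : (M <= k)%N -> eqmodX (geom k) 1.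
Proof.
move=> hk; have [M0|Mpos] := posnP M; first by exists (geom k - 1); rewrite M0 expr0 mulr1.
rewrite /geom -(prednK Mpos) big_ord_recl /= muln0 expr0.
exists (\sum_(i < M.-1) 'X^(k * bump 0 i - M)).
rewrite addrAC subrr add0r mulr_suml; apply: eq_bigr => i _; rewrite -exprD subnK //.
by apply: leq_trans hk _; rewrite leq_pmulr.
Qed.

Lemma prod_1subX_geom (e : nat -> nat) : (forall k, 0 < e k)%N ->
  eqmodX ((\prod_(k < M) (1 - 'X^(e k))) * \prod_(k < M) geom (e k)) 1.
Proof.
by move=> he; rewrite -big_split; apply: eqmodX_prod1 => k _; apply: mul_1subX_geom.
Qed.

(* 1 + X^k = (1 - X^(2k)) / (1 - X^k): the even-exponent factors cancel. *)
Lemma prod_1addX_geom_odd :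
  eqmodX (\prod_(k < M) (1 + 'X^(k.+1))) (\prod_(k < M) geom (2 * k + 1)).
Proof.
set D := \prod_(k < M) _; set G := \prod_(k < M) _.
pose Q := \prod_(k < M) (1 - 'X^(k.+1)) : {poly R}.
pose O := \prod_(k < M) (1 - 'X^(2 * k + 1)) : {poly R}.
have QG : eqmodX (Q * \prod_(k < M) geom k.+1) 1 by apply: (prod_1subX_geom (e := succn)).
have OG : eqmodX (O * G) 1.
  by apply: (prod_1subX_geom (e := fun k => 2 * k + 1)%N) => k; rewrite addn1.
have DQ : D * Q = \prod_(k < M) (1 - 'X^((2 * k + 1).+1)).
  rewrite -big_split; apply: eq_bigr => k _.
  have -> : ((2 * k + 1).+1 = k.+1 * 2)%N by lia.
  by rewrite exprM /=; ring.
have DOQ : eqmodX (D * O * Q) (1 * Q).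
  have -> : D * O * Q = \prod_(k < M + M) (1 - 'X^(k.+1)).
    rewrite mulrAC DQ mulrC (big_ord_even_odd _ _ (fun k => 1 - 'X^(k.+1))); congr (_ * _).
    by apply: eq_bigr => k _; rewrite addn1.
  rewrite mul1r; apply: (@eqmodX_prod_tail M (fun k => 1 - 'X^(k.+1))) => k hk.
  by have [q hq] := eqmodX_Xn (leqW hk); exists (- q); rewrite mulNr -hq; ring.
have DO : eqmodX (D * O) 1 := eqmodX_cancel DOQ QG.
apply: (eqmodX_cancel (U := O) (V := D)); last by rewrite mulrC.
by rewrite [G * O]mulrC; apply: eqmodX_trans DO (eqmodX_sym OG).
Qed.

End PolyModX.

Section GeneratingFunctions.
Local Open Scope ring_scope.

Lemma coef_prod_sum_cond (R : comNzRingType) (I J : finType) (c : I -> J -> bool)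
    (e : I -> J -> nat) N :
  (\prod_(i : I) \sum_(j : J) (if c i j then 'X^(e i j) else 0) : {poly R})`_N =
  #|[set f : {ffun I -> J} | [forall i, c i (f i)] && (\sum_i e i (f i) == N)%N]|%:R.
Proof.
rewrite bigA_distr_bigA coef_sum -sum1dep_card natr_sum [RHS]big_mkcond /=.
apply: eq_bigr => f _.
have -> : \prod_i (if c i (f i) then 'X^(e i (f i)) else 0) =
    if [forall i, c i (f i)] then 'X^(\sum_i e i (f i)) else 0 :> {poly R}.
  have [/forallP cf|/forallPn [i ci]] := boolP [forall i, c i (f i)].
    by rewrite -prodrXr; apply: eq_bigr => i _; rewrite cf.
  by rewrite (bigD1 i) //= (negbTE ci) mul0r.
by case: [forall _, _]; rewrite ?coef0 // coefXn eq_sym; case: (_ == _).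
Qed.

Definition distinct_parts N :=
  [set g : {ffun 'I_N.+1 -> bool} | ~~ g ord0 && (\sum_(k < N.+1) k * g k == N)%N].

Lemma card_distinct_parts_coef N :
  #|distinct_parts N|%:R = (\prod_(k < N) (1 + 'X^(k.+1)) : {poly int})`_N.
Proof.
have -> : \prod_(k < N) (1 + 'X^(k.+1)) = \prod_(k < N.+1) \sum_(c : bool)
    (if ~~ ((k == 0 :> nat) && c) then 'X^(k * c) else 0) :> {poly int}.
  rewrite big_ord_recl big_bool /= add0r mul0n expr0 mul1r; apply: eq_bigr => k _.
  by rewrite big_bool /= muln1 muln0 expr0 addrC.
rewrite coef_prod_sum_cond; congr _%:R; apply: eq_card => g; rewrite !inE.
congr (_ && _); apply/idP/forallP => [g0 k|g0]; last exact: g0 ord0.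
have [k0|] := posnP k; last by case: k => [[|k] ?].
by rewrite (_ : k = ord0) //; apply: val_inj.
Qed.

Lemma b2_coef N :
  (b 2 N)%:R = (\prod_(k < N.+1) (if odd k then geom int N.+1 k else 1))`_N.
Proof.
have -> : \prod_(k < N.+1) (if odd k then geom int N.+1 k else 1) =
    \prod_(k < N.+1) \sum_(j < N.+1)
      (if ~~ (((k == 0 :> nat) || ~~ odd k) && (j != 0 :> nat)) then 'X^(k * j) else 0).
  apply: eq_bigr => k _; rewrite /geom; have [ok|ek] := boolP (odd k).
    have k0 : (k == 0 :> nat) = false by apply: contraTF ok => /eqP ->.
    by apply: eq_bigr => j _; rewrite k0.
  by rewrite big_ord_recl /= muln0 expr0 orbT andbF /= big1 ?addr0.
rewrite coef_prod_sum_cond /b; congr _%:R; apply: eq_card => m; rewrite !inE.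
rewrite /is_partition_mult /is_regular_mult; case: (_ == N); rewrite ?andbF ?andbT //.
apply/andP/forallP => [[m0 /forallP mreg] k|mk].
  have [k0|kp] := posnP k; first by rewrite (_ : k = ord0) ?m0 //; apply: val_inj.
  have := mreg k; rewrite kp dvdn2 /=.
  by case: (odd k) => //= /eqP ->.
split; first by have := mk ord0; rewrite /= negbK.
apply/forallP => k; apply/implyP => /andP [k0 k2].
by have := mk k; rewrite -dvdn2 k2 orbT /= negbK.
Qed.

Lemma b2_distinct_parts N : b 2 N = #|distinct_parts N|.
Proof.
apply/eqP; rewrite -(eqr_nat int) b2_coef card_distinct_parts_coef; apply/eqP.
apply: (eqmodX_coef (M := N.+1)) (ltnSn N).
pose F k := if odd k then geom int N.+1 k else 1.
apply: (@eqmodX_trans _ _ _ (\prod_(k < N.+1) geom int N.+1 (2 * k + 1))).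
  have -> : \prod_(k < N.+1) geom int N.+1 (2 * k + 1) = \prod_(k < N.+1 + N.+1) F k.
    rewrite big_ord_even_odd [X in _ = X * _]big1 ?mul1r => [|k _]; last first.
      by rewrite /F mul2n odd_double.
    by apply: eq_bigr => k _; rewrite /F addn1 /= mul2n odd_double.
  apply/eqmodX_sym/eqmodX_prod_tail => k hk; rewrite /F.
  by case: (odd k); [apply: geom_ge | apply: eqmodX_refl].
apply: eqmodX_trans (eqmodX_sym (prod_1addX_geom_odd _ _)) _.
rewrite big_ord_recr /= -[X in eqmodX _ _ X]mulr1; apply: eqmodX_mul; first exact: eqmodX_refl.
by rewrite -[X in eqmodX _ _ X]addr0; apply: eqmodX_add; [apply: eqmodX_refl | apply: eqmodX_Xn].
Qed.

End GeneratingFunctions.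

Lemma odd_card_involution (T : finType) (A : {set T}) (f : T -> T) :
  {in A, forall x, f x \in A} -> {in A, involutive f} -> {in A, forall x, f x != x} ->
  ~~ odd #|A|.
Proof.
have [n] := ubnP #|A|; elim: n A => // n IH A hn fA fK fx.
have [->|[x xA]] := set_0Vmem A; first by rewrite cards0.
pose B := A :\ x :\ f x.
have cardA : #|A| = #|B|.+2.
  by rewrite (cardsD1 x A) xA (cardsD1 (f x) (A :\ x)) !inE (fx x xA) (fA x xA).
have memB y : y \in B -> [/\ y \in A, y != x & y != f x].
  by rewrite !inE => /and3P [].
rewrite cardA /= negbK; apply: IH => [|y /memB [yA yx yfx] | y /memB [yA _ _] | y /memB [yA _ _]].
- by move: hn; rewrite cardA; lia.
- rewrite !inE (fA y yA) andbT; apply/andP; split.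
    by apply: contra_neq yx => fyfx; rewrite -(fK y yA) fyfx fK.
  by apply: contra_neq yfx => fyx; rewrite -(fK y yA) fyx.
- exact: fK.
- exact: fx.
Qed.

Section FindIota.
Variable a : pred nat.

Lemma find_iota_le n k : k < n -> a k -> (find a (iota 0 n) <= k) && a (find a (iota 0 n)).
Proof.
move=> kn ak; have has_a : has a (iota 0 n) by apply/hasP; exists k; rewrite ?mem_iota.
have := nth_find 0 has_a; have := has_a; rewrite has_find size_iota => fn.
rewrite nth_iota // add0n => -> /[!andbT]; rewrite leqNgt; apply/negP => kf.
by have := before_find 0 kf; rewrite nth_iota ?add0n ?ak //; lia.
Qed.

Lemma before_find_iota n d : d < find a (iota 0 n) -> ~~ a d.
Proof.
move=> df; have dn : d < n by have := find_size a (iota 0 n); rewrite size_iota; lia.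
by have := before_find 0 df; rewrite nth_iota // add0n => ->.
Qed.

Lemma find_iota_eq n k : k < n -> a k -> (forall d, d < k -> ~~ a d) -> find a (iota 0 n) = k.
Proof.
move=> kn ak below; have /andP [fk af] := find_iota_le kn ak.
by apply/eqP; rewrite eqn_leq fk leqNgt; apply: contraL af; apply: below.
Qed.

Lemma find_iota_ge n k : k <= n -> (forall d, d < k -> ~~ a d) -> k <= find a (iota 0 n).
Proof.
move=> kn below; rewrite leqNgt; apply/negP => fk.
have has_a : has a (iota 0 n) by rewrite has_find size_iota; lia.
by have := nth_find 0 has_a; rewrite nth_iota ?add0n; [apply/negP/below | lia].
Qed.

End FindIota.

Lemma sum_interval s m : s <= m.+1 -> (\sum_(s <= k < m.+1) k) * 2 = (m + s) * (m.+1 - s).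
Proof.
elim: m => [|m IH] sm; first by case: s sm => [|[|]] // _; rewrite ?big_nat1 ?big_geq.
have [sm1|sm2] : s <= m.+1 \/ s = m.+2 by lia.
  by rewrite big_nat_recr //= mulnDl IH //; nia.
by rewrite sm2 big_geq // subnn !muln0.
Qed.

Section Franklin.
Variable N : nat.
Local Notation M := N.+1.
Implicit Types g h : {ffun 'I_M -> bool}.

Definition part g x := (x < M) && g (inord x).
Definition set_part g x v := [ffun k : 'I_M => if (k : nat) == x then v else g k].
Definition weight g := \sum_(k < M) k * g k.

Lemma part_ord g (k : 'I_M) : part g k = g k.
Proof. by rewrite /part ltn_ord inord_val. Qed.

Lemma part_set g x v y :
  part (set_part g x v) y = if y == x then (y < M) && v else part g y.
Proof.
rewrite /part /set_part; have [yM|] := ltnP y M; last by case: (_ == _).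
by rewrite ffunE inordK.
Qed.

Lemma part_le g x : part g x -> x <= N.
Proof. by case/andP. Qed.

Lemma part_inj g h : (forall x, part g x = part h x) -> g = h.
Proof. by move=> gh; apply/ffunP => k; rewrite -!part_ord. Qed.

Lemma weight_set g x v : x < M -> weight (set_part g x v) + x * part g x = weight g + x * v.
Proof.
move=> xM; pose i := Ordinal xM; rewrite -[x]/(i : nat) part_ord /weight.
rewrite (bigD1 i) //= (bigD1 i (F := fun k : 'I_M => k * g k)) //= ffunE eqxx.
rewrite (eq_bigr (fun k : 'I_M => k * g k)) => [|k ki]; first lia.
by rewrite ffunE (negbTE (ki : (k : nat) != i)).
Qed.

Lemma leq_parts_weight g x y : x != y -> part g x -> part g y -> x + y <= weight g.
Proof.
move=> xy gx gy; have xM := part_le gx; have yM := part_le gy.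
have := weight_set g false (xM : x < M); rewrite gx muln0 addn0.
have := weight_set (set_part g x false) false (yM : y < M).
by rewrite part_set (negbTE (_ : y != x)) 1?eq_sym // gy muln0 addn0; lia.
Qed.

Lemma part_exists g : 0 < weight g -> exists x, part g x.
Proof.
case: (pickP (fun k : 'I_M => g k)) => [k gk|none]; first by exists k; rewrite part_ord.
by rewrite /weight big1 // => k _; rewrite none muln0.
Qed.

Lemma weight_interval g s m : s <= m.+1 -> m <= N ->
  (forall y, part g y = (s <= y <= m)) -> weight g * 2 = (m + s) * (m.+1 - s).
Proof.
move=> sm mN gsm; rewrite -sum_interval //; congr (_ * 2).
rewrite /weight (eq_bigr (fun k : 'I_M => if s <= k <= m then k : nat else 0)); last first.
  by move=> k _; rewrite -part_ord gsm; case: (_ && _); rewrite ?muln1 ?muln0.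
rewrite -(big_mkord xpredT (fun k => if s <= k <= m then k else 0)).
rewrite (@big_cat_nat _ _ _ s) ?(@big_cat_nat _ _ _ m.+1 s M) //=; try lia.
rewrite big1_seq ?add0n => [|k /andP [_]]; last by rewrite mem_iota; case: ifP => //; lia.
rewrite [X in _ + X]big1_seq ?addn0 => [|k /andP [_]]; last first.
  by rewrite mem_iota; case: ifP => //; lia.
by apply: eq_big_nat => k km; rewrite ifT //; lia.
Qed.

Definition largest g := N - find (fun d => part g (N - d)) (iota 0 M).
Definition smallest g := find (part g) (iota 0 M).
(* The length of the run of consecutive parts ending at the largest part. *)
Definition slope g := find (fun d => ~~ part g (largest g - d)) (iota 0 M).

Lemma largest_spec g x : part g x -> (x <= largest g) && part g (largest g).
Proof.
move=> gx; have xN := part_le gx; have xM : N - x < M by lia.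
have gNx : part g (N - (N - x)) by rewrite subKn.
have /andP [fx gf] := @find_iota_le (fun d => part g (N - d)) _ _ xM gNx.
by rewrite /largest gf andbT; lia.
Qed.

Lemma smallest_spec g x : part g x -> (smallest g <= x) && part g (smallest g).
Proof. by move=> gx; exact: find_iota_le (part_le gx : x < M) gx. Qed.

(* Removing the smallest part [s] and adding 1 to each of the [s] largest parts
   [m - s + 1, ..., m] only removes [s] and [m - s + 1] and adds [m + 1]. *)
Definition base_to_slope g :=
  set_part (set_part (set_part g (smallest g) false)
    (largest g - smallest g).+1 false) (largest g).+1 true.

(* Subtracting 1 from each of the [r] largest parts [m - r + 1, ..., m] and adding
   a new part [r] removes [m] and adds [m - r] and [r]. *)
Definition slope_to_base g :=
  set_part (set_part (set_part g (largest g) false)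
    (largest g - slope g) true) (slope g) true.

Definition franklin g :=
  if smallest g <= slope g then base_to_slope g else slope_to_base g.

Hypothesis N_not_pentagonal : forall x, 24 * N + 1 != x ^ 2.

Lemma N_gt0 : 0 < N.
Proof. by rewrite lt0n; apply: contra_neq (N_not_pentagonal 1) => ->. Qed.

Section Shape.
Variable g : {ffun 'I_M -> bool}.
Hypotheses (g0 : ~~ part g 0) (gN : weight g = N).

Lemma part_some : exists x, part g x.
Proof. by apply: part_exists; rewrite gN N_gt0. Qed.

Lemma part_largest : part g (largest g).
Proof. by have [x /largest_spec /andP []] := part_some. Qed.

Lemma largest_max y : part g y -> y <= largest g.
Proof. by case/largest_spec/andP. Qed.

Lemma part_smallest : part g (smallest g).
Proof. by have [x /smallest_spec /andP []] := part_some. Qed.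

Lemma smallest_min y : part g y -> smallest g <= y.
Proof. by case/smallest_spec/andP. Qed.

Lemma smallest_gt0 : 0 < smallest g.
Proof. by rewrite lt0n; apply: contraNneq g0 => <-; apply: part_smallest. Qed.

Lemma largest_le : largest g <= N.
Proof. exact: part_le part_largest. Qed.

Lemma smallest_le_largest : smallest g <= largest g.
Proof. exact: smallest_min part_largest. Qed.

Lemma slope_spec :
  [/\ slope g <= largest g, ~~ part g (largest g - slope g)
    & forall d, d < slope g -> part g (largest g - d)].
Proof.
have mM : largest g < M by rewrite ltnS largest_le.
have gap0 : ~~ part g (largest g - largest g) by rewrite subnn.
have /andP [] := @find_iota_le (fun d => ~~ part g (largest g - d)) _ _ mM gap0.
by split=> // d /before_find_iota /negbNE.
Qed.

Lemma part_interval :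
  (forall d, d < (largest g).+1 - smallest g -> part g (largest g - d)) ->
  forall y, part g y = (smallest g <= y <= largest g).
Proof.
move=> run y; apply/idP/andP => [gy|[sy ym]]; first by rewrite smallest_min ?largest_max.
by rewrite (_ : y = largest g - (largest g - y)); [apply: run | ]; lia.
Qed.

(* [k] parts forming an interval from [k] or [k + 1] sum to the pentagonal number k(3k -+ 1)/2. *)
Lemma not_interval k :
  (forall y, part g y = (smallest g <= y <= largest g)) ->
  (largest g).+1 = smallest g + k -> smallest g = k \/ smallest g = k.+1 -> False.
Proof.
move=> int mk sk; have s0 := smallest_gt0.
have sm : smallest g <= (largest g).+1 by lia.
have := weight_interval sm largest_le int; rewrite gN.
rewrite (_ : largest g + smallest g = (smallest g + smallest g + k).-1) //; last by lia.
rewrite (_ : (largest g).+1 - smallest g = k) //; last by lia.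
case: sk s0 => -> k0 e.
- move/eqP: (N_not_pentagonal (6 * k).-1); apply.
  by clear mk; case: k k0 e => // k _ e; rewrite mulnS /=; nia.
- by move/eqP: (N_not_pentagonal (6 * k).+1); apply; rewrite /= in e; nia.
Qed.

Section BaseToSlope.
Hypothesis base_le_slope : smallest g <= slope g.
Local Notation m := (largest g).
Local Notation s := (smallest g).
Local Notation t := (largest g - smallest g).+1.

Lemma smallest_lt_top : s < t.
Proof.
have [_ _ run] := slope_spec; have s0 := smallest_gt0; have sm := smallest_le_largest.
rewrite ltnNge; apply/negP => ts.
have slt : slope g <= t.
  rewrite leqNgt; apply/negP => /run; rewrite (_ : m - t = s.-1); last by lia.
  by move/smallest_min; lia.
by apply: (not_interval (k := s)); [apply: part_interval => d dt; apply: run | | left]; lia.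
Qed.

Lemma part_top : part g t.
Proof.
have [_ _ run] := slope_spec; have s0 := smallest_gt0; have sm := smallest_le_largest.
by rewrite (_ : t = m - s.-1); [apply: run | ]; lia.
Qed.

Lemma largest_lt_N : m < N.
Proof.
have st := smallest_lt_top; have s0 := smallest_gt0; have sm := smallest_le_largest.
have sm' : s != m by apply/eqP; lia.
by have := leq_parts_weight sm' part_smallest part_largest; rewrite gN; lia.
Qed.

Lemma part_base_to_slope y :
  part (base_to_slope g) y = (y == m.+1) || [&& y != t, y != s & part g y].
Proof.
rewrite !part_set; have := largest_lt_N.
case: (y =P m.+1) => [-> mN|_ _] /=; first by rewrite ltnS mN.
by case: (y == t); case: (y == s); rewrite /= ?andbF.
Qed.

Lemma weight_base_to_slope : weight (base_to_slope g) = N.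
Proof.
have st := smallest_lt_top; have mN := largest_lt_N; have sm := smallest_le_largest.
have s0 := smallest_gt0.
have gm1 : part g m.+1 = false by apply/negP => /largest_max; lia.
have sM : s < M by lia.
have tM : t < M by lia.
have m1M : m.+1 < M by lia.
have ts : (t == s) = false by apply/eqP; lia.
have m1t : (m.+1 == t) = false by apply/eqP; lia.
have m1s : (m.+1 == s) = false by apply/eqP; lia.
have e1 := weight_set g false sM; rewrite part_smallest /= muln0 addn0 in e1.
have e2 := weight_set (set_part g s false) false tM.
rewrite part_set ts part_top /= muln0 addn0 in e2.
have e3 := weight_set (set_part (set_part g s false) t false) true m1M.
rewrite !part_set m1t m1s gm1 muln0 addn0 muln1 in e3.
by rewrite /base_to_slope; lia.
Qed.

Lemma largest_base_to_slope : largest (base_to_slope g) = m.+1.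
Proof.
have /largest_spec /andP [le] : part (base_to_slope g) m.+1 by rewrite part_base_to_slope eqxx.
by rewrite part_base_to_slope => /orP [/eqP // | /and3P [_ _ /largest_max]]; lia.
Qed.

Lemma slope_base_to_slope : slope (base_to_slope g) = s.
Proof.
have [_ _ run] := slope_spec; have st := smallest_lt_top; have s0 := smallest_gt0.
have mN := largest_lt_N; have sm := smallest_le_largest.
rewrite /slope largest_base_to_slope; apply: find_iota_eq => [| | d ds]; first by lia.
  by rewrite /= part_base_to_slope subSn ?eqxx ?andbF ?orbF; [apply/eqP | ]; lia.
rewrite /= negbK part_base_to_slope; case: d ds => [|d] ds; first by rewrite subn0 eqxx.
by apply/orP; right; rewrite subSS run ?andbT; [apply/andP; split; apply/eqP | ]; lia.
Qed.

Lemma smallest_base_to_slope : s < smallest (base_to_slope g).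
Proof.
have /smallest_spec /andP [_] : part (base_to_slope g) m.+1 by rewrite part_base_to_slope eqxx.
rewrite part_base_to_slope => /orP [/eqP -> | /and3P [_ ns /smallest_min]].
  by have := smallest_le_largest; lia.
by rewrite leq_eqVlt eq_sym (negbTE ns).
Qed.

Lemma franklin_base_to_slope :
  [/\ ~~ part (base_to_slope g) 0, weight (base_to_slope g) = N,
      base_to_slope g != g & franklin (base_to_slope g) = g].
Proof.
have st := smallest_lt_top; have mN := largest_lt_N; have s0 := smallest_gt0.
have gm1 : part g m.+1 = false by apply/negP => /largest_max; lia.
split; last 1 first.
- rewrite /franklin ifN -?ltnNge ?slope_base_to_slope ?smallest_base_to_slope //.
  rewrite /slope_to_base largest_base_to_slope slope_base_to_slope.
  rewrite subSn; last exact: smallest_le_largest.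
  apply: part_inj => y; rewrite 3!part_set part_base_to_slope.
  case: (y =P s) => [->|_]; first by rewrite part_smallest andbT; lia.
  case: (y =P t) => [->|_]; first by rewrite part_top andbT; lia.
  by case: (y =P m.+1) => [->|_]; rewrite ?gm1 ?andbF.
- by rewrite part_base_to_slope (negbTE g0) !andbF.
- exact: weight_base_to_slope.
- by apply/eqP => e; have := part_base_to_slope m.+1; rewrite e gm1 eqxx.
Qed.

End BaseToSlope.

Section SlopeToBase.
Hypothesis slope_lt_base : slope g < smallest g.
Local Notation m := (largest g).
Local Notation s := (smallest g).
Local Notation r := (slope g).

Lemma slope_gt0 : 0 < r.
Proof.
have [_ gap _] := slope_spec; rewrite lt0n; apply: contraNneq gap => ->.
by rewrite subn0 part_largest.
Qed.

Lemma smallest_le_gap : s <= (m - r).+1.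
Proof.
have [rm _ run] := slope_spec; have s0 := smallest_gt0; have sm := smallest_le_largest.
rewrite leqNgt; apply/negP => gap_s.
have /smallest_min : part g (m - (m - s.-1)) by apply: run; lia.
lia.
Qed.

Lemma slope_lt_gap : r < m - r.
Proof.
have [rm _ run] := slope_spec; have sgap := smallest_le_gap; have s0 := smallest_gt0.
rewrite ltnNge; apply/negP => gap_r.
by apply: (not_interval (k := r)); [apply: part_interval => d dt; apply: run | | right]; lia.
Qed.

Lemma part_slope_to_base y :
  part (slope_to_base g) y = [|| y == r, y == m - r | (y != m) && part g y].
Proof.
have rg := slope_lt_gap; have mN := largest_le.
rewrite !part_set; case: (y =P r) => [->|_] /=; first by rewrite andbT; lia.
case: (y =P m - r) => [->|_] /=; last by case: (y == m); rewrite ?andbF.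
by rewrite andbT; lia.
Qed.

Lemma weight_slope_to_base : weight (slope_to_base g) = N.
Proof.
have [rm gap _] := slope_spec; have rg := slope_lt_gap; have mN := largest_le.
have r0 := slope_gt0.
have gr : part g r = false by apply/negP => /smallest_min; lia.
have mM : m < M by lia.
have gM : m - r < M by lia.
have rM : r < M by lia.
have gm : (m - r == m) = false by apply/eqP; lia.
have rg' : (r == m - r) = false by apply/eqP; lia.
have rm' : (r == m) = false by apply/eqP; lia.
have e1 := weight_set g false mM; rewrite part_largest /= muln1 in e1.
have e2 := weight_set (set_part g m false) true gM.
rewrite part_set gm (negbTE gap) /= muln0 muln1 addn0 in e2.
have e3 := weight_set (set_part (set_part g m false) (m - r) true) true rM.
rewrite !part_set rg' rm' gr /= muln0 muln1 addn0 in e3.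
by rewrite /slope_to_base; lia.
Qed.

Lemma largest_slope_to_base : largest (slope_to_base g) = m.-1.
Proof.
have [rm _ run] := slope_spec; have rg := slope_lt_gap; have r0 := slope_gt0.
have : part (slope_to_base g) m.-1.
  rewrite part_slope_to_base; have [->|gm] := eqVneq m.-1 (m - r); first by rewrite orbT.
  by rewrite (_ : m.-1 = m - 1) ?run ?andbT; [apply/orP; right; apply/eqP | | ]; lia.
move=> /largest_spec /andP [le]; rewrite part_slope_to_base.
by case/or3P => [/eqP | /eqP | /andP [/eqP mx /largest_max]]; lia.
Qed.

Lemma smallest_slope_to_base : smallest (slope_to_base g) = r.
Proof.
have rg := slope_lt_gap.
have /smallest_spec /andP [le] : part (slope_to_base g) r by rewrite part_slope_to_base eqxx.
rewrite part_slope_to_base; case/or3P => [/eqP | /eqP | /andP [_ /smallest_min]]; lia.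
Qed.

Lemma slope_slope_to_base : r <= slope (slope_to_base g).
Proof.
have [rm _ run] := slope_spec; have rg := slope_lt_gap; have r0 := slope_gt0.
have mN := largest_le.
rewrite [X in _ <= X]/slope largest_slope_to_base; apply: find_iota_ge => [|d dr]; first by lia.
rewrite /= negbK part_slope_to_base; have [->|dr1] := eqVneq d r.-1.
  by rewrite (_ : m.-1 - r.-1 = m - r) ?eqxx ?orbT //; lia.
by rewrite (_ : m.-1 - d = m - d.+1) ?run ?andbT; lia.
Qed.

Lemma franklin_slope_to_base :
  [/\ ~~ part (slope_to_base g) 0, weight (slope_to_base g) = N,
      slope_to_base g != g & franklin (slope_to_base g) = g].
Proof.
have [rm gap _] := slope_spec; have rg := slope_lt_gap; have r0 := slope_gt0.
have gr : part g r = false by apply/negP => /smallest_min; lia.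
have mN := largest_le.
split.
- rewrite part_slope_to_base (negbTE g0) andbF orbF negb_or.
  by apply/andP; split; apply/eqP; lia.
- exact: weight_slope_to_base.
- by apply/eqP => e; have := part_slope_to_base r; rewrite e gr eqxx.
rewrite /franklin smallest_slope_to_base ifT ?slope_slope_to_base //.
rewrite /base_to_slope largest_slope_to_base smallest_slope_to_base.
have -> : (m.-1 - r).+1 = m - r by lia.
have -> : m.-1.+1 = m by lia.
apply: part_inj => y; rewrite 3!part_set part_slope_to_base.
case: (y =P m) => [->|_]; first by rewrite part_largest andbT; lia.
case: (y =P m - r) => [->|_]; first by rewrite (negbTE gap) andbF.
by case: (y =P r) => [->|_]; rewrite ?gr ?andbF.
Qed.

End SlopeToBase.

Lemma franklin_spec :
  [/\ ~~ part (franklin g) 0, weight (franklin g) = N,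
      franklin g != g & franklin (franklin g) = g].
Proof.
have [base_le_slope | slope_lt_base] := leqP (smallest g) (slope g).
  have -> : franklin g = base_to_slope g by rewrite /franklin base_le_slope.
  exact: franklin_base_to_slope.
have -> : franklin g = slope_to_base g by rewrite /franklin leqNgt slope_lt_base.
exact: franklin_slope_to_base.
Qed.

End Shape.

Lemma mem_distinct_parts g : (g \in distinct_parts N) = ~~ part g 0 && (weight g == N).
Proof. by rewrite inE -(part_ord g ord0). Qed.

Lemma odd_card_distinct_parts : ~~ odd #|distinct_parts N|.
Proof.
apply: (@odd_card_involution _ _ franklin) => g; rewrite mem_distinct_parts;
  move=> /andP [g0 /eqP gN]; have [f0 fN fg fK] := franklin_spec g0 gN.
- by rewrite mem_distinct_parts f0 fN eqxx.
- exact: fK.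
- exact: fg.
Qed.

End Franklin.

Lemma prime_sqr_mod24 p : prime p -> 5 <= p -> p ^ 2 = 1 %[mod 24].
Proof.
move=> pp p5; have ndvd d : 1 < d < 5 -> ~~ (d %| p).
  move=> d15; have d1 : d != 1 by lia.
  by apply: contraTN p5 => /(prime_nt_dvdP pp d1) <-; lia.
have mod24 d : d %| 24 -> (d %| p %% 24) = (d %| p).
  by move=> d24; rewrite /dvdn (modn_dvdm _ d24).
have n2 : ~~ (2 %| p %% 24) by rewrite mod24 ?ndvd.
have n3 : ~~ (3 %| p %% 24) by rewrite mod24 ?ndvd.
rewrite -modnXm; have : p %% 24 < 24 by rewrite ltn_mod.
move: (p %% 24) n2 n3 => r n2 n3 r24.
have residues : all (fun r => [|| 2 %| r, 3 %| r | r ^ 2 %% 24 == 1]) (iota 0 24) by [].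
by have /allP/(_ r) := residues; rewrite mem_iota (negbTE n2) (negbTE n3) => /(_ r24) /eqP.
Qed.

Lemma logn_sqr_even p x : ~~ odd (logn p (x ^ 2)).
Proof. by rewrite lognX oddM. Qed.

Section Progression.
Variables p alpha n i : nat.
Hypotheses (pp : prime p) (p5 : 5 <= p) (alpha1 : 1 <= alpha) (ip : 1 <= i <= p.-1).
Local Notation N := (p ^ (2 * alpha) * n + ((24 * i + p) * p ^ (2 * alpha - 1) - 1) %/ 24).

Lemma progression_24N1 :
  24 * N + 1 = p ^ (2 * alpha - 1) * (p * (24 * n + 1) + 24 * i).
Proof.
have [e ee] : exists e, 2 * alpha = e.+1 by exists (2 * alpha - 1); lia.
rewrite ee subSS subn0; set K := (24 * i + p) * p ^ e.
have K1 : K = 1 %[mod 24].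
  rewrite /K -modnMml [24 * i]mulnC modnMDl modnMml -expnS -ee.
  by rewrite expnM -modnXm prime_sqr_mod24 // modnXm exp1n.
have {K1} eK : K = 24 * (K %/ 24) + 1 by rewrite {1}(divn_eq K 24) K1 mulnC.
have -> : (K - 1) %/ 24 = K %/ 24 by rewrite {1}eK addnK mulKn.
rewrite mulnDr -addnA -eK /K expnS; ring.
Qed.

Lemma logn_progression : logn p (24 * N + 1) = 2 * alpha - 1.
Proof.
rewrite progression_24N1 mulnC logn_Gauss ?pfactorK // prime_coprime //.
rewrite (dvdn_addr _ (dvdn_mulr _ (dvdnn p))) Euclid_dvdM // negb_or; apply/andP; split.
  apply/negP => p24; have : p \in primes 24 by rewrite mem_primes pp p24.
  by rewrite (_ : primes 24 = [:: 2; 3]) // !inE => /pred2P [] p23; lia.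
by apply/negP => /dvdn_leq; lia.
Qed.

Lemma progression_not_square x : 24 * N + 1 != x ^ 2.
Proof.
apply: contraTneq (logn_sqr_even p x) => <-; rewrite logn_progression negbK.
by rewrite (_ : 2 * alpha - 1 = (alpha.-1).*2.+1) /= ?odd_double //; lia.
Qed.

End Progression.

Theorem theorem3p2 (p alpha n i : nat) :
  prime p -> 5 <= p -> 1 <= alpha -> 1 <= i <= p.-1 ->
  b 2 (p ^ (2 * alpha) * n + ((24 * i + p) * p ^ (2 * alpha - 1) - 1) %/ 24)
    = 0 %[mod 2].
Proof.
move=> pp p5 alpha1 ip; rewrite b2_distinct_parts !modn2 /=.
by rewrite (negbTE (odd_card_distinct_parts _)) // => x; apply: progression_not_square.
Qed.
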